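(* Let $X,Y$ be measurable spaces and $\hat\nu$ a probability kernel. Then (1) the map $\pi\mapsto H^{\hat\nu}(\pi)$ on probabilities on $X\times Y$ is concave; (2) if $\pi_n,\pi$ are probabilities on $X\times Y$ such that $\int f\,d\pi_n\to\int f\,d\pi$ for every bounded measurable $f:X\times Y\to\mathbb{R}$, then $\limsup_n H^{\hat\nu}(\pi_n)\le H^{\hat\nu}(\pi)$.
   Context: A probability kernel is a family $\hat\nu=\{\hat\nu^y: y\in Y\}$ of probabilities on $X$ such that $y\mapsto\hat\nu^y(B)$ is measurable for each measurable $B\subset X$. $\mathcal{F}(\pi)$ is the set of measurable functions whose $\pi$-integral is well defined, and $H^{\hat\nu}(\pi)=-\sup\{\int c\,d\pi:\ c\in\mathcal{F}(\pi),\ \int e^{c(x,y)}\hat\nu^y(dx)=1\ \forall y\}$. *)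

From HB Require Import structures.
From mathcomp Require Import all_boot all_order all_algebra.
From mathcomp Require Import all_classical all_reals all_analysis.
Set Implicit Arguments. Unset Strict Implicit. Unset Printing Implicit Defensive.
Import Order.TTheory GRing.Theory Num.Theory.
Local Open Scope classical_set_scope.
Local Open Scope ring_scope.
Local Open Scope ereal_scope.

Definition integral_well_defined d (T : measurableType d) (R : realType)
  (mu : set T -> \bar R) (f : T -> \bar R) : Prop :=
  (\int[mu]_x maxe (f x) 0 < +oo) \/ (\int[mu]_x maxe (- f x) 0 < +oo).

Definition calF d1 d2 (X : measurableType d1) (Y : measurableType d2)
  (R : realType) (pi : probability (X * Y)%type R) : set (X * Y -> R) :=
  [set c | measurable_fun setT c /\
           integral_well_defined pi (fun z => (c z)%:E)].

Definition Hnu d1 d2 (X : measurableType d1) (Y : measurableType d2)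
  (R : realType) (nu : R.-pker Y ~> X) (pi : probability (X * Y)%type R)
  : \bar R :=
  - ereal_sup [set \int[pi]_z (c z)%:E | c in
      [set c | calF pi c /\
               forall y : Y, \int[nu y]_x (expR (c (x, y)))%:E = 1]].

From HB Require Import structures.
From mathcomp Require Import all_boot all_order all_algebra.
From mathcomp Require Import all_classical all_reals all_analysis.
From mathcomp Require Import measurable_realfun lra.
Import Order.TTheory GRing.Theory Num.Theory.
Set Implicit Arguments.
Unset Strict Implicit.
Unset Printing Implicit Defensive.
Local Open Scope classical_set_scope.
Local Open Scope ring_scope.
Local Open Scope ereal_scope.

(* Concavity: the integrals of the positive and negative parts of [c] are
   affine along a mixture, and [c] is admissible for each component under
   which its negative part has finite mass; if it has infinite mass under one
   component, the integral of [c] under the mixture is [-oo].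

   Upper semicontinuity: for a bounded normalised [c] the functional
   [pi |-> \int c dpi] is continuous along the convergence, so it suffices
   to approximate an admissible [c] from below by bounded normalised
   potentials. Clamping [c] to [[ln e, M]] and renormalising costs at most
   [e], because the normaliser [Z y = \int e^(clamp c) dnu^y] lies in
   [[e, 1 + e]]; monotone convergence in [M] then recovers [\int c dpi]. *)

Section clamp.
Variable R : realDomainType.
Implicit Types lo hi r : R.

Definition clamp lo hi r : R := Num.max (Num.min r hi) lo.

Lemma clamp_ge lo hi r : (lo <= clamp lo hi r)%R.
Proof. by rewrite le_max lexx orbT. Qed.

Lemma clamp_le lo hi r : (clamp lo hi r <= Num.max hi lo)%R.
Proof. by rewrite ge_max !le_max ge_min !lexx !orbT. Qed.

Lemma min_le_clamp lo hi r : (Num.min r hi <= clamp lo hi r)%R.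
Proof. by rewrite le_max lexx. Qed.

Lemma normr_le_bounds lo hi r : (lo <= r <= hi)%R -> (`|r| <= `|lo| + `|hi|)%R.
Proof.
move=> /andP[lo_r r_hi]; have := ler_norm (- lo); have := ler_norm hi.
have := normr_ge0 lo; have := normr_ge0 hi; rewrite normrN ler_norml => *.
by apply/andP; split; lra.
Qed.

Lemma norm_clamp_le lo hi r : (`|clamp lo hi r| <= `|lo| + `|Num.max hi lo|)%R.
Proof. by apply: normr_le_bounds; rewrite clamp_ge clamp_le. Qed.

Lemma clamp_pos_ge lo hi r :
  (Num.min (Num.max r 0) hi <= Num.max (clamp lo hi r) 0)%R.
Proof.
apply: le_trans (le_max2 (min_le_clamp lo hi r) (lexx 0)).
have [r0|r0] := leP r 0%R.
  by rewrite le_max; apply/orP; right; rewrite ge_min lexx.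
by rewrite le_max lexx.
Qed.

Lemma clamp_neg_le lo hi r : (0 <= hi)%R ->
  (Num.max (- clamp lo hi r) 0 <= Num.max (- r) 0)%R.
Proof.
move=> hi0; rewrite ge_max [X in _ && X]le_max lexx orbT andbT le_max.
have [r_hi|hi_r] := leP r hi.
  by rewrite lerN2 (le_trans _ (min_le_clamp lo hi r))// le_min lexx r_hi.
apply/orP; right; rewrite oppr_le0.
apply: le_trans hi0 (le_trans _ (min_le_clamp lo hi r)).
by rewrite le_min lexx ltW.
Qed.

End clamp.

Lemma expR_clamp_le (R : realType) (lo hi r : R) :
  (expR (clamp lo hi r) <= expR r + expR lo)%R.
Proof.
rewrite /clamp; have [_|lo_lt] := leP (Num.min r hi) lo.
  by rewrite lerDr expR_ge0.
by rewrite -[leLHS]addr0 lerD ?expR_ge0// ler_expR ge_min lexx.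
Qed.

Lemma measurable_clamp d (T : measurableType d) (R : realType) (lo hi : R)
    (f : T -> R) :
  measurable_fun setT f -> measurable_fun setT (fun x => clamp lo hi (f x)).
Proof.
move=> mf; apply: measurable_maxr; last exact: measurable_cst.
by apply: measurable_minr => //; exact: measurable_cst.
Qed.

Section measure_facts.
Context d (T : measurableType d) (R : realType).

Lemma integral_cst_setT1 (mu : {measure set T -> \bar R}) (r : R) :
  mu setT = 1 -> \int[mu]_x r%:E = r%:E.
Proof.
by move=> mu1; rewrite (_ : (fun _ => _) = cst r%:E)// integral_cst// mu1 mule1.
Qed.

Lemma ge0_integral_comb (mu mu1 mu2 : {measure set T -> \bar R}) (a b : R)
    (f : T -> \bar R) : (0 <= a)%R -> (0 <= b)%R ->
  (forall A, measurable A -> mu A = a%:E * mu1 A + b%:E * mu2 A) ->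
  measurable_fun setT f -> (forall x, 0 <= f x) ->
  \int[mu]_x f x = a%:E * \int[mu1]_x f x + b%:E * \int[mu2]_x f x.
Proof.
move=> a0 b0 muE mf f0.
rewrite (eq_measure_integral
  (measure_add (mscale (NngNum a0) mu1) (mscale (NngNum b0) mu2))); last first.
  by move=> A mA _; rewrite muE//; exact/esym/measure_addE.
by rewrite ge0_integral_measure_add// !ge0_integral_mscale.
Qed.

Lemma ge0_integral_le_mine (mu : {measure set T -> \bar R}) (f : T -> \bar R)
    (l : \bar R) : measurable_fun setT f -> (forall x, 0 <= f x) ->
  (forall n : nat, \int[mu]_x mine (f x) n%:R%:E <= l) -> \int[mu]_x f x <= l.
Proof.
move=> mf f0 le_l.
have mfn (n : nat) : measurable_fun setT (fun x => mine (f x) n%:R%:E).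
  by apply: measurable_mine => //; exact: measurable_cst.
have fn0 (n : nat) x : 0 <= mine (f x) n%:R%:E.
  by rewrite le_min f0 lee_fin ler0n.
have nd_fn x :
    {homo (fun n : nat => mine (f x) n%:R%:E) : m n / (m <= n)%N >-> m <= n}.
  by move=> m n mn; apply: le_min2 => //; rewrite lee_fin ler_nat.
rewrite (eq_integral (fun x => limn (fun n : nat => mine (f x) n%:R%:E))).
  rewrite monotone_convergence//; apply: lime_le; last exact: nearW.
  apply: ereal_nondecreasing_is_cvgn => m n mn.
  by apply: ge0_le_integral => // x _; exact: nd_fn.
move=> x _; have [fy|fx] := eqVneq (f x) +oo.
  rewrite fy (_ : (fun n : nat => _) = fun n : nat => n%:R%:E); last first.
    by apply/funext => n; rewrite min_r ?leey.
  by apply/esym/cvg_lim => //; apply/cvgenyP.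
apply/esym/lim_near_cst => //.
have fxr : f x = (fine (f x))%:E by rewrite fineK// ge0_fin_numE ?ltey.
near=> n; rewrite fxr -EFin_min min_l//.
by near: n; exact: nbhs_infty_ger.
Unshelve. all: by end_near.
Qed.

Lemma bounded_integrable (mu : {measure set T -> \bar R}) (f : T -> R) :
  mu setT < +oo -> measurable_fun setT f ->
  (exists B : R, forall x, (`|f x| <= B)%R) -> mu.-integrable setT (EFin \o f).
Proof.
move=> mu_fin mf [B fB]; apply: measurable_bounded_integrable => //.
exists B; split; first by rewrite num_real.
by move=> M /ltW BM x _; exact: le_trans (fB x) BM.
Qed.

End measure_facts.

Lemma lee_limn_einf (R : realType) (u v : (\bar R)^nat) :
  (forall n, u n <= v n) -> limn_einf u <= limn_einf v.
Proof.
move=> uv; rewrite !limn_einf_lim; apply: lee_lim; [exact: is_cvg_einfs..|].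
apply: nearW => n; apply/ereal_infP => _ [k /= nk <-].
by apply: le_trans (uv k); apply: ereal_inf_lbound; exists k.
Qed.

Lemma lee_combB (R : realType) (t s : R) (a1 a2 S1 S2 : \bar R) (b1 b2 : R) :
  (0 <= t)%R -> (0 <= s)%R -> a1 - b1%:E <= S1 -> a2 - b2%:E <= S2 ->
  (t%:E * a1 + s%:E * a2) - (t%:E * b1%:E + s%:E * b2%:E) <=
  t%:E * S1 + s%:E * S2.
Proof.
move=> t0 s0 le1 le2.
apply: le_trans (leeD (lee_wpmul2l _ le1) (lee_wpmul2l _ le2));
  rewrite ?lee_fin//.
by rewrite !muleBr// ?fin_num_adde_defl// -!EFinM addeACA oppeD.
Qed.

Section dual_value.
Context d1 d2 (X : measurableType d1) (Y : measurableType d2) (R : realType)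
  (nu : R.-pker Y ~> X).
Local Notation prob := (probability (X * Y)%type R).
Implicit Types (pi p q : prob) (c : X * Y -> R).

Definition normalized (c : X * Y -> R) :=
  forall y, \int[nu y]_x (expR (c (x, y)))%:E = 1.

Definition admissible (pi : prob) : set (X * Y -> R) :=
  [set c | calF pi c /\ normalized c].

Definition Snu (pi : prob) :=
  ereal_sup [set \int[pi]_z (c z)%:E | c in admissible pi].

Lemma HnuE pi : Hnu nu pi = - Snu pi. Proof. by []. Qed.

Lemma Snu_ub pi c : admissible pi c -> \int[pi]_z (c z)%:E <= Snu pi.
Proof. by move=> c_adm; apply: ereal_sup_ubound; exists c. Qed.

Lemma admissible_negpart pi c : measurable_fun setT c -> normalized c ->
  \int[pi]_z (EFin \o c)^\- z != +oo -> admissible pi c.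
Proof.
move=> mc c1 negfin; split => //; split => //; right.
by rewrite ltey; move: negfin; under eq_integral do rewrite funenegE.
Qed.

Lemma admissible_bounded pi c : measurable_fun setT c -> normalized c ->
  (exists B : R, forall z, (`|c z| <= B)%R) -> admissible pi c.
Proof.
move=> mc c1 [B cB]; apply: admissible_negpart => //; rewrite -ltey.
apply: le_lt_trans (ltry `|B|).
rewrite -(integral_cst_setT1 `|B| (probability_setT pi)).
apply: ge0_le_integral => //.
- exact/measurable_funeneg/measurable_EFinP.
- move=> z _; rewrite funenegE /= -EFin_max lee_fin ge_max normr_ge0 andbT.
  by rewrite (le_trans (ler_norm _))// normrN (le_trans (cB z) (ler_norm _)).
Qed.

Lemma normalized0 : normalized (fun _ => 0%R).
Proof. by move=> y; rewrite expR0 integral_cst_setT1// prob_kernel. Qed.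

Lemma Snu_ge0 pi : 0 <= Snu pi.
Proof.
rewrite -[leLHS](integral_cst_setT1 0%R (probability_setT pi)).
apply/Snu_ub/admissible_bounded; first exact: measurable_cst.
  exact: normalized0.
by exists 0%R => _; rewrite normr0.
Qed.

Lemma eq_Snu (p q : prob) : (forall A, measurable A -> p A = q A) ->
  Snu p = Snu q.
Proof.
move=> pq; have eq_int (g : X * Y -> \bar R) : \int[p]_z g z = \int[q]_z g z.
  by apply: eq_measure_integral => A mA _; exact: pq.
rewrite /Snu; congr ereal_sup; apply/seteqP; split => _ [c [[mc wd] c1] <-];
  exists c; rewrite ?eq_int//; split => //; split => //;
  by move: wd; rewrite /integral_well_defined !eq_int.
Qed.

Lemma Snu_mixture_le (p1 p2 p : prob) (t : R) : (0 < t < 1)%R ->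
  (forall A, measurable A -> p A = t%:E * p1 A + (1 - t)%:E * p2 A) ->
  Snu p <= t%:E * Snu p1 + (1 - t)%:E * Snu p2.
Proof.
move=> /andP[t0 t1] pE; have s0 : (0 < 1 - t)%R by rewrite subr_gt0.
apply: ge_ereal_sup => _ [c [[mc _] c1] <-].
have mf : measurable_fun setT (EFin \o c) by exact/measurable_EFinP.
have mix g := ge0_integral_comb (f := g) (ltW t0) (ltW s0) pE.
rewrite integralE (mix _ (measurable_funepos mf) (funepos_ge0 _)).
rewrite (mix _ (measurable_funeneg mf) (funeneg_ge0 _)).
have neg_ge0 q : 0 <= \int[q]_z (EFin \o c)^\- z.
  by apply: integral_ge0 => z _; exact: funeneg_ge0.
have scaled_neg_neqNy (a : R) q : (0 <= a)%R ->
    a%:E * \int[q]_z (EFin \o c)^\- z != -oo.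
  by move=> a0; rewrite gt_eqF// (lt_le_trans (ltNyr 0%R))// mule_ge0.
have [neg1y|neg1] := eqVneq (\int[p1]_z (EFin \o c)^\- z) +oo.
  rewrite neg1y gt0_muley ?lte_fin// addye ?addeNy ?leNye//.
  by rewrite scaled_neg_neqNy ?ltW.
have [neg2y|neg2] := eqVneq (\int[p2]_z (EFin \o c)^\- z) +oo.
  rewrite neg2y (@gt0_muley _ (1 - t)%:E) ?lte_fin// addey ?addeNy ?leNye//.
  by rewrite scaled_neg_neqNy ?ltW.
have le_Snu q : \int[q]_z (EFin \o c)^\- z != +oo ->
    \int[q]_z (EFin \o c)^\+ z - \int[q]_z (EFin \o c)^\- z <= Snu q.
  by move=> negq; rewrite -integralE; exact/Snu_ub/admissible_negpart.
have fin q : \int[q]_z (EFin \o c)^\- z != +oo ->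
    \int[q]_z (EFin \o c)^\- z = (fine (\int[q]_z (EFin \o c)^\- z))%:E.
  by move=> negq; rewrite fineK// ge0_fin_numE ?ltey.
move: (le_Snu _ neg1) (le_Snu _ neg2); rewrite (fin _ neg1) (fin _ neg2).
by apply: lee_combB; exact: ltW.
Qed.

Lemma Hnu_concave (p1 p2 p : prob) (t : R) : (0 <= t <= 1)%R ->
  (forall A, measurable A -> p A = t%:E * p1 A + (1 - t)%:E * p2 A) ->
  t%:E * Hnu nu p1 + (1 - t)%:E * Hnu nu p2 <= Hnu nu p.
Proof.
move=> /andP[t0 t1] pE; have s0 : (0 <= 1 - t)%R by rewrite subr_ge0.
rewrite !HnuE !muleN -oppeD ?leeN2; last first.
  by apply: ge0_adde_def; rewrite inE mule_ge0// ?lee_fin// Snu_ge0.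
have [t_eq0|tn0] := eqVneq t 0%R.
  rewrite t_eq0 mul0e add0e subr0 mul1e (@eq_Snu p p2)// => A mA.
  by rewrite pE// t_eq0 mul0e add0e subr0 mul1e.
have [t_eq1|tn1] := eqVneq t 1%R.
  rewrite t_eq1 mul1e subrr mul0e adde0 (@eq_Snu p p1)// => A mA.
  by rewrite pE// t_eq1 mul1e subrr mul0e adde0.
by apply: Snu_mixture_le => //; rewrite !lt_neqAle eq_sym tn0 tn1 t0 t1.
Qed.

Section normalization.
Variables (c : X * Y -> R) (b M : R).
Hypotheses (mc : measurable_fun setT c) (c1 : normalized c).

Let g z := clamp b M (c z).

Let mg : measurable_fun setT g. Proof. exact: measurable_clamp. Qed.

Let Z y := \int[nu y]_x (expR (g (x, y)))%:E.

Let measurable_section (f : X * Y -> R) y :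
  measurable_fun setT f -> measurable_fun setT (fun x => (expR (f (x, y)))%:E).
Proof.
move=> mf; apply/measurable_EFinP/measurableT_comp => //.
exact: measurable_fun_pair1.
Qed.

Let Z_ge y : (expR b)%:E <= Z y.
Proof.
rewrite -(integral_cst_setT1 _ (prob_kernel (s := nu) y)).
apply: ge0_le_integral => // [|x _]; first exact: measurable_section.
by rewrite lee_fin ler_expR clamp_ge.
Qed.

Let Z_le y : Z y <= (1 + expR b)%:E.
Proof.
apply: (@le_trans _ _ (\int[nu y]_x ((expR (c (x, y)))%:E + (expR b)%:E))).
  apply: ge0_le_integral => //; first exact: measurable_section.
    by apply: emeasurable_funD => //; exact: measurable_section.
  by move=> x _; rewrite -EFinD lee_fin expR_clamp_le.
rewrite ge0_integralD//; last exact: measurable_section.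
by rewrite c1 integral_cst_setT1 ?prob_kernel// EFinD.
Qed.

Let mZ : measurable_fun setT Z.
Proof.
apply: (measurable_fun_integral_finite_kernel
  (fun yx => (expR (g (yx.2, yx.1)))%:E) nu).
  by move=> yx /=; rewrite lee_fin expR_ge0.
apply/measurable_EFinP/measurableT_comp => //; apply: measurableT_comp mg _.
exact: measurable_fun_pair measurable_snd measurable_fst.
Qed.

Let z y := fine (Z y).

Let Z_fin y : Z y = (z y)%:E.
Proof.
rewrite /z fineK// ge0_fin_numE ?(le_trans _ (Z_ge y)) ?lee_fin ?expR_ge0//.
exact: le_lt_trans (Z_le y) (ltry _).
Qed.

Let z_gt0 y : (0 < z y)%R.
Proof. by rewrite (lt_le_trans (expR_gt0 b))// -lee_fin -Z_fin. Qed.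

(* from [expR b <= z y <= 1 + expR b] and [ln (1 + x) <= x] *)
Let ln_z_ge y : (b <= ln (z y))%R.
Proof. by rewrite -ler_expR lnK ?posrE// -lee_fin -Z_fin. Qed.

Let ln_z_le y : (ln (z y) <= expR b)%R.
Proof.
apply: le_trans (le_ln1Dx _); last first.
  by rewrite (lt_le_trans _ (expR_ge0 b))// ltrN10.
by rewrite ler_ln ?posrE// ?(lt_le_trans (z_gt0 y))// -lee_fin -Z_fin.
Qed.

Let c' z0 := (g z0 - ln (z z0.2))%R.

Lemma normalized_minorant : exists c2 : X * Y -> R,
  [/\ measurable_fun setT c2, normalized c2,
      exists B : R, forall z0, (`|c2 z0| <= B)%R &
      forall z0, (clamp b M (c z0) - expR b <= c2 z0)%R].
Proof.
have c'_ge z0 : (g z0 - expR b <= c' z0)%R.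
  exact: lerB (lexx _) (ln_z_le _).
exists c'; split => //.
- apply: measurable_funB => //.
  apply: measurableT_comp; first exact: measurable_ln.
  apply: measurableT_comp (fine_measurable measurableT) _.
  exact: measurableT_comp mZ measurable_snd.
- move=> y; under eq_integral do rewrite /c' /= expRB lnK ?posrE// EFinM.
  rewrite ge0_integralZr//; last by rewrite lee_fin invr_ge0 ltW.
    by rewrite -/(Z y) Z_fin -EFinM divff// gt_eqF.
  exact: measurable_section.
- exists (`|b - expR b| + `|Num.max M b - b|)%R => z0; apply: normr_le_bounds.
  rewrite (le_trans _ (c'_ge z0)) ?lerD2r ?clamp_ge//=.
  exact: lerB (clamp_le _ _ _) (ln_z_ge _).
Qed.

End normalization.

Section approximation.
Variables (p : prob) (L : \bar R).
Hypothesis bounded_le : forall c, measurable_fun setT c -> normalized c ->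
  (exists B : R, forall z, (`|c z| <= B)%R) -> \int[p]_z (c z)%:E <= L.

Let integrable_bounded (f : X * Y -> R) : measurable_fun setT f ->
  (exists B : R, forall z, (`|f z| <= B)%R) -> p.-integrable setT (EFin \o f).
Proof. by apply: bounded_integrable; exact: fin_num_fun_lty. Qed.

Lemma integral_clamp_le c M e : measurable_fun setT c -> normalized c ->
  (0 < e)%R -> \int[p]_z (clamp (ln e) M (c z))%:E <= L + e%:E.
Proof.
move=> mc c1 e0.
have [c2 [mc2 c21 c2B c2_ge]] := normalized_minorant (ln e) M mc c1.
apply: (@le_trans _ _ (\int[p]_z ((EFin \o c2) \+ cst e%:E) z)).
  apply: le_integral => //.
  - apply: (integrable_bounded (f := fun z => clamp (ln e) M (c z))).
      exact: measurable_clamp.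
    by eexists => z; exact: norm_clamp_le.
  - apply: integrableD => //; first exact: integrable_bounded.
    by apply: (integrable_bounded (f := cst e)) => //; exists `|e|%R.
  - move=> z _; rewrite /= -EFinD lee_fin -lerBlDr.
    by rewrite -{2}(lnK (e0 : e \is Num.pos)).
rewrite integralD//; last 2 first.
- exact: integrable_bounded.
- by apply: (integrable_bounded (f := cst e)) => //; exists `|e|%R.
have -> : \int[p]_z cst e%:E z = e%:E.
  exact: integral_cst_setT1 _ (probability_setT p).
by apply: leeD => //; exact: bounded_le.
Qed.

Lemma integral_minepos_le c M : measurable_fun setT c -> normalized c ->
  (0 <= M)%R -> \int[p]_z (EFin \o c)^\- z \is a fin_num ->
  \int[p]_z mine ((EFin \o c)^\+ z) M%:E <= L + \int[p]_z (EFin \o c)^\- z.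
Proof.
move=> mc c1 M0 neg_fin; apply/lee_addgt0Pr => e e0.
pose g z := clamp (ln e) M (c z).
have mg : measurable_fun setT (EFin \o g).
  exact/measurable_EFinP/measurable_clamp.
have pos_le :
    \int[p]_z mine ((EFin \o c)^\+ z) M%:E <= \int[p]_z (EFin \o g)^\+ z.
  apply: ge0_le_integral => //.
  - by move=> z _; rewrite le_min funepos_ge0 lee_fin.
  - apply: measurable_mine; last exact: measurable_cst.
    exact/measurable_funepos/measurable_EFinP.
  - exact: measurable_funepos.
  - move=> z _; rewrite !funeposE /= -!EFin_max -EFin_min lee_fin.
    exact: clamp_pos_ge.
have neg_le : \int[p]_z (EFin \o g)^\- z <= \int[p]_z (EFin \o c)^\- z.
  apply: ge0_le_integral => //.
  - exact: measurable_funeneg.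
  - exact/measurable_funeneg/measurable_EFinP.
  - by move=> z _; rewrite !funenegE /= -!EFin_max lee_fin clamp_neg_le.
have g_neg_fin : \int[p]_z (EFin \o g)^\- z \is a fin_num.
  rewrite ge0_fin_numE ?integral_ge0// (le_lt_trans neg_le)// ltey_eq.
  by rewrite neg_fin.
have := integral_clamp_le M mc c1 e0; rewrite integralE leeBlDr// => int_g.
apply: le_trans pos_le (le_trans int_g _).
by rewrite [leRHS]addeAC leeD.
Qed.

Lemma admissible_integral_le c : admissible p c -> \int[p]_z (c z)%:E <= L.
Proof.
move=> [[mc _] c1]; rewrite integralE.
have [->|neg_fin] := eqVneq (\int[p]_z (EFin \o c)^\- z) +oo.
  by rewrite addeNy leNye.
have neg_fin_num : \int[p]_z (EFin \o c)^\- z \is a fin_num.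
  by rewrite ge0_fin_numE ?ltey// integral_ge0.
rewrite leeBlDr//; apply: ge0_integral_le_mine => [|//|n].
  exact/measurable_funepos/measurable_EFinP.
exact: integral_minepos_le.
Qed.

End approximation.

Lemma Snu_le_limn_einf (pn : nat -> prob) p :
  (forall f : X * Y -> R, measurable_fun setT f ->
    (exists M : R, forall z, (`|f z| <= M)%R) ->
    \int[pn n]_z (f z)%:E @[n --> \oo] --> \int[p]_z (f z)%:E) ->
  Snu p <= limn_einf (Snu \o pn).
Proof.
move=> pn_cvg; apply: ge_ereal_sup => _ [c c_adm <-].
apply: admissible_integral_le c_adm => c2 mc2 c21 c2B.
rewrite -(cvg_limn_einf_sup (pn_cvg _ mc2 c2B)).1.
by apply: lee_limn_einf => n; exact/Snu_ub/admissible_bounded.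
Qed.

End dual_value.

Theorem mainTheorem4 (d1 d2 : measure_display) (X : measurableType d1)
  (Y : measurableType d2) (R : realType) (nu : R.-pker Y ~> X) :
  (forall (p1 p2 p : probability (X * Y)%type R) (t : R),
     (0 <= t <= 1)%R ->
     (forall A, measurable A -> p A = t%:E * p1 A + (1 - t)%:E * p2 A) ->
     t%:E * Hnu nu p1 + (1 - t)%:E * Hnu nu p2 <= Hnu nu p) /\
  (forall (pn : nat -> probability (X * Y)%type R)
          (p : probability (X * Y)%type R),
     (forall f : X * Y -> R, measurable_fun setT f ->
        (exists M : R, forall z, (`|f z| <= M)%R) ->
        (\int[pn n]_z (f z)%:E) @[n --> \oo] --> \int[p]_z (f z)%:E) ->
     limn_esup (fun n => Hnu nu (pn n)) <= Hnu nu p).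
Proof.
split; first exact: Hnu_concave.
move=> pn p pn_cvg.
have -> : limn_esup (fun n => Hnu nu (pn n)) = - limn_einf (Snu nu \o pn).
  exact: limn_esupN.
by rewrite HnuE leeN2; exact: Snu_le_limn_einf.
Qed.
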